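(* Let $n\ge1$, $\preceq$ an admissible order on $L([0,1])$, $G\colon L([0,1])^n\to L([0,1])$ non-decreasing and $F\colon L([0,1])^2\to L([0,1])$ non-decreasing in the first variable. Then the IV Sugeno-like $FG$-functional $\mathbf S_m^{F,G}$ is non-decreasing (in each argument, w.r.t. $\preceq$) for every symmetric IV fuzzy measure $m$.
   Context: $N=\{1,\dots,n\}$. $L([0,1])=\{[a,b]:0\le a\le b\le1\}$, $\mathbf0=[0,0]$, $\mathbf1=[1,1]$. An admissible order $\preceq$ is a total order on $L([0,1])$ with $[a,b]\preceq[c,d]$ whenever $a\le c$, $b\le d$. All monotonicity is w.r.t. $\preceq$ (for $G$, in each argument). An IV fuzzy measure w.r.t. $\preceq$ is $m\colon2^N\to L([0,1])$, $m(\emptyset)=\mathbf0$, $m(N)=\mathbf1$, $m(A)\preceq m(B)$ for $A\subseteq B$; symmetric if $m(A)=m(B)$ whenever $|A|=|B|$. For a permutation $\sigma$, $E_{\sigma(i)}=\{\sigma(i),\dots,\sigma(n)\}$. $\mathbf S_m^{F,G}(X_1,\dots,X_n)=G\big(F(X_{\sigma(1)},m(E_{\sigma(1)})),\dots,F(X_{\sigma(n)},m(E_{\sigma(n)}))\big)$ with $\sigma$ any permutation such that $X_{\sigma(1)}\preceq\dots\preceq X_{\sigma(n)}$ (independent of the choice of $\sigma$ for symmetric $m$). *)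

From mathcomp Require Import all_boot all_order fingroup perm all_algebra.
From mathcomp Require Import reals.
Set Implicit Arguments. Unset Strict Implicit. Unset Printing Implicit Defensive.
Import Order.TTheory GRing.Theory Num.Theory.
Local Open Scope ring_scope.

Section IV.
Variable R : realType.

Record IV := mkIV { lo : R; hi : R;
  IV_ok : (0 <= lo) && (lo <= hi) && (hi <= 1) }.

Lemma iv0_ok : (0 <= (0:R)) && ((0:R) <= 0) && ((0:R) <= 1).
Proof. by rewrite lexx ler01. Qed.
Lemma iv1_ok : (0 <= (1:R)) && ((1:R) <= 1) && ((1:R) <= 1).
Proof. by rewrite lexx ler01. Qed.

Definition iv0 : IV := mkIV iv0_ok.
Definition iv1 : IV := mkIV iv1_ok.

Definition admissible (le : rel IV) : Prop :=
  [/\ reflexive le, antisymmetric le, transitive le, total le &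
      forall x y, lo x <= lo y -> hi x <= hi y -> le x y].

Variable n : nat.

Definition upd (x : 'I_n -> IV) (i : 'I_n) (a : IV) : 'I_n -> IV :=
  fun j => if j == i then a else x j.

Definition nondecr_each (le : rel IV) (H : ('I_n -> IV) -> IV) : Prop :=
  forall x i a, le (x i) a -> le (H x) (H (upd x i a)).

Definition nondecr_first (le : rel IV) (F : IV -> IV -> IV) : Prop :=
  forall x y z, le x y -> le (F x z) (F y z).

Definition IV_fuzzy_measure (le : rel IV) (m : {set 'I_n} -> IV) : Prop :=
  [/\ m set0 = iv0, m setT = iv1 &
      forall A B : {set 'I_n}, A \subset B -> le (m A) (m B)].

Definition symmetric_measure (m : {set 'I_n} -> IV) : Prop :=
  forall A B : {set 'I_n}, #|A| = #|B| -> m A = m B.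

Definition sorting (le : rel IV) (X : 'I_n -> IV) (s : {perm 'I_n}) : bool :=
  [forall i : 'I_n, forall j : 'I_n, (i <= j)%N ==> le (X (s i)) (X (s j))].

Definition Eset (s : {perm 'I_n}) (i : 'I_n) : {set 'I_n} :=
  [set s k | k in [pred k : 'I_n | (i <= k)%N]].

Definition sort_perm (le : rel IV) (X : 'I_n -> IV) : {perm 'I_n} :=
  odflt 1%g [pick s | sorting le X s].

Definition SFG (le : rel IV) (m : {set 'I_n} -> IV) (F : IV -> IV -> IV)
    (G : ('I_n -> IV) -> IV) (X : 'I_n -> IV) : IV :=
  let s := sort_perm le X in G (fun i => F (X (s i)) (m (Eset s i))).

End IV.

From mathcomp Require Import all_boot all_order fingroup perm all_algebra.
From mathcomp Require Import reals boolp.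
Set Implicit Arguments. Unset Strict Implicit. Unset Printing Implicit Defensive.

(* For symmetric m, m(E_{s(k)}) depends only on k, since |E_{s(k)}| = n - k for
   every permutation s; so the k-th argument of G is F applied to the k-th
   smallest input and a fixed measure value.  Raising one input raises every
   order statistic: if the k-th smallest of the new inputs were below the k-th
   smallest of the old ones, the k+1 smallest new inputs would dominate k+1
   distinct old inputs that are all below the old k-th smallest, of which
   there are only k. *)

Section SugenoMonotone.
Variables (R : realType) (n : nat) (le : rel (IV R)).
Hypotheses (le_refl : reflexive le) (le_trans : transitive le) (le_total : total le).

Lemma sorting_exists (X : 'I_n -> IV R) : exists s, sorting le X s.
Proof.
pose r i j := le (X i) (X j).
have r_total : total r by move=> i j; apply: le_total.
have r_trans : transitive r by move=> i j k; apply: le_trans.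
have r_refl : reflexive r by move=> i; apply: le_refl.
have size_srt : size (sort r (enum 'I_n)) == n by rewrite size_sort size_enum_ord.
pose t := Tuple size_srt.
have /tuple_uniqP t_inj : uniq t by rewrite sort_uniq enum_uniq.
exists (perm t_inj); apply/forallP => i; apply/forallP => j; apply/implyP => le_ij.
rewrite !permE (tnth_nth i) (tnth_nth i).
by apply: (sorted_leq_nth r_trans r_refl); rewrite ?sort_sorted ?inE ?size_tuple.
Qed.

Lemma sort_permP (X : 'I_n -> IV R) : sorting le X (sort_perm le X).
Proof.
rewrite /sort_perm; case: pickP => [s -> //| no_sorting].
by have [s] := sorting_exists X; rewrite no_sorting.
Qed.

Lemma sorting_le_mono (X Y : 'I_n -> IV R) (s t : {perm 'I_n}) :
  (forall j, le (X j) (Y j)) -> sorting le X s -> sorting le Y t ->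
  forall k, le (X (s k)) (Y (t k)).
Proof.
move=> leXY /forallP sortX /forallP sortY k; apply/negPn/negP => not_le.
pose upto_k := [set p : 'I_n | (p <= k)%N].
pose below_k := [set p : 'I_n | (p < k)%N].
have below_upto : below_k \proper upto_k.
  apply/properP; split; last by exists k; rewrite !inE ?leqnn ?ltnn.
  by apply/subsetP => p; rewrite !inE => /ltnW.
have t_upto_sub : t @: upto_k \subset s @: below_k.
  apply/subsetP => j /imsetP [p]; rewrite inE => le_pk ->.
  apply/imsetP; exists (s^-1 (t p))%g; last by rewrite permKV.
  rewrite inE ltnNge; apply/negP => le_k.
  have := sortX k => /forallP /(_ (s^-1 (t p))%g) /implyP /(_ le_k).
  rewrite permKV => le_Xsk; apply: (negP not_le).
  apply: (le_trans le_Xsk); apply: (le_trans (leXY _)).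
  by have := sortY p => /forallP /(_ k) /implyP /(_ le_pk).
have := subset_leq_card t_upto_sub.
rewrite !card_imset; try exact: perm_inj.
by rewrite leqNgt (proper_card below_upto).
Qed.

Lemma nondecr_each_mono (G : ('I_n -> IV R) -> IV R) : nondecr_each le G ->
  forall u v : 'I_n -> IV R, (forall k, le (u k) (v k)) -> le (G u) (G v).
Proof.
move=> G_mono u v le_uv.
pose w (j : nat) (k : 'I_n) := if (k < j)%N then v k else u k.
have le_Gw j : le (G u) (G (w j)).
  elim: j => [|j IHj].
    by have -> : w 0%N = u by apply: funext.
  have [lt_jn | le_nj] := ltnP j n.
    pose o := Ordinal lt_jn.
    have -> : w j.+1 = upd (w j) o (v o).
      apply: funext => k; rewrite /w /upd ltnS leq_eqVlt.
      case: (eqVneq k o) => [->|]; first by rewrite eqxx.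
      by rewrite -val_eqE /= => /negbTE ->.
    by apply: le_trans IHj _; apply: G_mono; rewrite /w ltnn.
  suff -> : w j.+1 = w j by [].
  apply: funext => k; rewrite /w.
  have lt_kj : (k < j)%N := leq_trans (ltn_ord k) le_nj.
  by rewrite lt_kj ltnS (ltnW lt_kj).
by have -> : v = w n by apply: funext => k; rewrite /w ltn_ord.
Qed.

Lemma card_Eset (s t : {perm 'I_n}) (k : 'I_n) : #|Eset s k| = #|Eset t k|.
Proof. by rewrite /Eset !card_imset //; exact: perm_inj. Qed.

End SugenoMonotone.

Unset Implicit Arguments.
Theorem proposition12 (R : realType) (n : nat) (le : rel (IV R))
  (F : IV R -> IV R -> IV R) (G : ('I_n -> IV R) -> IV R) :
  (0 < n)%N ->
  admissible le ->
  nondecr_each le G ->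
  nondecr_first le F ->
  forall m : {set 'I_n} -> IV R,
    IV_fuzzy_measure le m -> symmetric_measure m ->
    nondecr_each le (SFG le m F G).
Proof.
move=> _ [le_refl _ le_trans le_total _] G_mono F_mono m _ m_sym X i a le_Xia.
have le_X_upd j : le (X j) (upd X i a j) by rewrite /upd; case: eqP => [->|].
have sortedP := sort_permP le_refl le_trans le_total.
rewrite /SFG; apply: (nondecr_each_mono le_refl le_trans G_mono) => k.
rewrite (m_sym (Eset (sort_perm le (upd X i a)) k) (Eset (sort_perm le X) k));
  last exact: card_Eset.
by apply/F_mono/(sorting_le_mono le_trans le_X_upd); apply: sortedP.
Qed.
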